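(* Let $m,n$ be nonzero integers with $|m|<|n|$. Let $u_1,u_2,u_3$ be vertices of type $a$ of $\Lambda_{m,n}$ with $u_1<u_2<u_3$. For $i,j\in\{1,2,3\}$ let $\Lambda_{ij}=\mathrm{lk}_\Lambda(u_i)\cap\mathrm{lk}_\Lambda(u_j)$, and assume $\Lambda_{13}\neq\emptyset$. Then $\Lambda_{13}\subsetneq\Lambda_{12}$ and $\Lambda_{13}\subseteq \Lambda_{23}$. Moreover, if $m$ does not divide $n$ then $\Lambda_{13}\subsetneq \Lambda_{23}$, and if $m$ divides $n$ then $\Lambda_{13}=\Lambda_{23}$.
   Context: $\mathrm{BS}(m,n)=\langle a,t\mid ta^mt^{-1}=a^n\rangle$; $\Upsilon_{m,n}$ is its Cayley graph for $\{a,t\}$ (edges $g\to gs$ oriented, labeled $s$); $a$-lines and $t$-lines are the subgraphs spanned by left cosets of $\langle a\rangle$ and $\langle t\rangle$. $\Lambda_{m,n}$ has one vertex per $a$-line or $t$-line (of type $a$ or $t$), adjacent when the lines intersect; $\mathrm{lk}_\Lambda(u)$ is the set of neighbours of $u$. $T$ is the Bass–Serre tree whose vertices are the $a$-lines (= type-$a$ vertices), with one edge oriented from $\ell$ to $\ell'$ for each pair of $a$-lines such that $gt\in\ell'$ for some $g\in\ell$. Partial order: $v_1\le v_2$ if every edge of the geodesic from $v_1$ to $v_2$ in $T$ is oriented toward $v_2$; $<$ denotes strict order. *)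

(* Baumslag-Solitar group BS(m,n) = <a,t | t a^m t^-1 = a^n>
   presented concretely: group elements are words in a^{+-1}, t^{+-1},
   compared up to the congruence generated by free reduction and insertion/
   deletion of the relator t a^m t^-1 a^-n (this is exactly the presented group). *)
From Stdlib Require Import ZArith List Relations.
Import ListNotations.
Open Scope Z_scope.

Inductive gen := GA | GT.
(* a letter: generator together with an "inverse" flag *)
Definition letter : Type := (gen * bool)%type.
Definition word : Type := list letter.
Definition inv_letter (l : letter) : letter := (fst l, negb (snd l)).

Definition gpow (x : gen) (k : Z) : word :=
  if 0 <=? k then repeat (x, false) (Z.to_nat k)
  else repeat (x, true) (Z.to_nat (- k)).

Definition relator (m n : Z) : word :=
  (GT, false) :: gpow GA m ++ (GT, true) :: gpow GA (- n).

Inductive bs_step (m n : Z) : word -> word -> Prop :=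
| step_free u v l : bs_step m n (u ++ l :: inv_letter l :: v) (u ++ v)
| step_rel u v : bs_step m n (u ++ relator m n ++ v) (u ++ v).

Definition bs_eq (m n : Z) : relation word :=
  clos_refl_sym_trans word (bs_step m n).

(* Vertices of Lambda_{m,n}: an a-line g<a> or a t-line g<t>, given by a
   representative g (cosets are compared via [vsame]). *)
Inductive vtype := TypeA | TypeT.
Definition vgen (ty : vtype) : gen := match ty with TypeA => GA | TypeT => GT end.
Record vertex := Vtx { vty : vtype; vrep : word }.

Definition line (m n : Z) (v : vertex) (h : word) : Prop :=
  exists k : Z, bs_eq m n h (vrep v ++ gpow (vgen (vty v)) k).

Definition vsame (m n : Z) (u v : vertex) : Prop :=
  vty u = vty v /\ forall h, line m n u h <-> line m n v h.

Definition adjL (m n : Z) (u v : vertex) : Prop :=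
  ~ vsame m n u v /\ exists h, line m n u h /\ line m n v h.

(* lk(u_i) ∩ lk(u_j), as a predicate on vertices (invariant under vsame) *)
Definition Lam (m n : Z) (ui uj : vertex) (w : vertex) : Prop :=
  adjL m n ui w /\ adjL m n uj w.

(* Bass-Serre tree: vertices = a-lines; oriented edge l -> l' iff g t ∈ l'
   for some g ∈ l *)
Definition Tedge (m n : Z) (l l' : vertex) : Prop :=
  vty l = TypeA /\ vty l' = TypeA /\
  exists g, line m n l g /\ line m n l' (g ++ [(GT, false)]).

Definition Tadj (m n : Z) (l l' : vertex) : Prop := Tedge m n l l' \/ Tedge m n l' l.

(* walk x = x0, x1, ..., xk ≈ y in T, with xs = [x1; ...; xk] *)
Fixpoint is_walk (m n : Z) (x : vertex) (xs : list vertex) (y : vertex) : Prop :=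
  match xs with
  | [] => vsame m n x y
  | z :: zs => Tadj m n x z /\ is_walk m n z zs y
  end.

Definition geodesic (m n : Z) (x : vertex) (xs : list vertex) (y : vertex) : Prop :=
  is_walk m n x xs y /\
  forall ys, is_walk m n x ys y -> (length xs <= length ys)%nat.

Fixpoint all_fwd (m n : Z) (x : vertex) (xs : list vertex) : Prop :=
  match xs with
  | [] => True
  | z :: zs => Tedge m n x z /\ all_fwd m n z zs
  end.

Definition Tle (m n : Z) (v1 v2 : vertex) : Prop :=
  vty v1 = TypeA /\ vty v2 = TypeA /\
  forall xs, geodesic m n v1 xs v2 -> all_fwd m n v1 xs.

Definition Tlt (m n : Z) (v1 v2 : vertex) : Prop :=
  Tle m n v1 v2 /\ ~ vsame m n v1 v2.

Definition psubset (P Q : vertex -> Prop) : Prop := forall w, P w -> Q w.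
Definition pssubset (P Q : vertex -> Prop) : Prop :=
  psubset P Q /\ exists w, Q w /\ ~ P w.
Definition peq (P Q : vertex -> Prop) : Prop := forall w, P w <-> Q w.

(* Every element of BS(m,n) has a unique Britton normal form
   a^r1 t^±1 ... a^rk t^±1 a^s, and the a-line through g is determined by
   the syllables of g.  If u1 < u2 < u3 and g lies on u1, then u2 = g P<a> and
   u3 = g P Q<a>, where P and Q use only positive powers of t, with p, q >= 1
   letters t.  A t-line meeting u1 and u3 runs from some g a^i to g a^i t^(p+q);
   since such positive words cannot cancel against normal forms, g a^i t^p lies
   on u2, so the t-line also meets u2.  The remaining claims are arithmetic:
   with d = gcd(m, n) and n = d n', the power a^(d n'^k) commutes past t^k
   but, as |m| < |n|, not past t^(k+1); this gives a t-line of Λ12 missing u3.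
   If m does not divide n, the t-line through g a^i t^p a^(d n'^q) meets u2
   and u3 but not u1, because t^p a^(d n'^q) t^-p is not a power of a.  If
   m | n, every exponent that commutes past one t is a multiple of n, and
   its conjugate by t^p is a power of a, so Λ23 = Λ13. *)
From Stdlib Require Import ZArith List Relations Lia Setoid Classical.
Import ListNotations.
Open Scope Z_scope.

Lemma Z_div_eq0_of_mod_id r N : N <> 0 -> r mod N = r -> r / N = 0.
Proof. intros HN H. apply Z.div_small_iff; auto. apply Z.mod_id_iff in H. lia. Qed.

Section NormalForm.
Variables m n : Z.
Hypothesis m_neq0 : m <> 0.
Hypothesis n_neq0 : n <> 0.

(* A normal form ([(r1, e1); ...; (rk, ek)], s) stands for the word
   a^r1 t^(±1) ... a^rk t^(±1) a^s, with e = true for t^-1.  A syllable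
   exponent is reduced modulo [tmod e] (n before t, m before t^-1), the
   excess being carried across as [tcarry e] times as much, since
   a^n t = t a^m and a^m t^-1 = t^-1 a^n. *)
Definition nform : Type := (list (Z * bool) * Z)%type.
Definition tmod (e : bool) : Z := if e then m else n.
Definition tcarry (e : bool) : Z := if e then n else m.

Lemma tmod_neq0 e : tmod e <> 0.
Proof. destruct e; simpl; auto. Qed.

Fixpoint lmulA_syl (j : Z) (b : list (Z * bool)) (s : Z) : nform :=
  match b with
  | [] => ([], s + j)
  | (r, e) :: rest =>
      let X := lmulA_syl ((r + j) / tmod e * tcarry e) rest s in
      (((r + j) mod tmod e, e) :: fst X, snd X)
  end.

Definition lmulA (j : Z) (X : nform) : nform := lmulA_syl j (fst X) (snd X).

Definition lmulT (X : nform) : nform :=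
  match fst X with
  | (r, true) :: rest => if Z.eqb r 0 then (rest, snd X) else ((0, false) :: fst X, snd X)
  | _ => ((0, false) :: fst X, snd X)
  end.

Definition lmulTi (X : nform) : nform :=
  match fst X with
  | (r, false) :: rest => if Z.eqb r 0 then (rest, snd X) else ((0, true) :: fst X, snd X)
  | _ => ((0, true) :: fst X, snd X)
  end.

Definition lmul_letter (l : letter) (X : nform) : nform :=
  match l with
  | (GA, false) => lmulA 1 X
  | (GA, true) => lmulA (-1) X
  | (GT, false) => lmulT X
  | (GT, true) => lmulTi X
  end.

Definition lmul (w : word) (X : nform) : nform := fold_right lmul_letter X w.

Definition nf1 : nform := ([], 0).
Definition nf (w : word) : nform := lmul w nf1.

Definition no_pinch (e : bool) (rest : list (Z * bool)) : Prop :=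
  match rest with (r', e') :: _ => ~ (r' = 0 /\ e' = negb e) | [] => True end.

Fixpoint reduced_syl (b : list (Z * bool)) : Prop :=
  match b with
  | [] => True
  | (r, e) :: rest => r mod tmod e = r /\ reduced_syl rest /\ no_pinch e rest
  end.

Definition reduced (X : nform) : Prop := reduced_syl (fst X).

Lemma lmulA_syl_add : forall b j j' s,
  lmulA_syl j (fst (lmulA_syl j' b s)) (snd (lmulA_syl j' b s)) = lmulA_syl (j + j') b s.
Proof.
  induction b as [|[r e] rest IH]; intros j j' s; simpl.
  - f_equal; ring.
  - rewrite IH. pose proof (tmod_neq0 e) as HN.
    rewrite Z.add_mod_idemp_l by auto.
    replace (r + j' + j) with (r + (j + j')) by ring.
    assert (Hcarry : ((r + j') mod tmod e + j) / tmod e * tcarry e + (r + j') / tmod e * tcarry e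
                     = (r + (j + j')) / tmod e * tcarry e).
    { rewrite <- Z.mul_add_distr_r. f_equal.
      assert (Hdiv : r + (j + j') = (r + j') / tmod e * tmod e + ((r + j') mod tmod e + j))
        by (pose proof (Z.div_mod (r + j') (tmod e) HN); lia).
      rewrite Hdiv, Z.div_add_l by auto. ring. }
    rewrite Hcarry. reflexivity.
Qed.

Lemma lmulA_syl_0 : forall b s, reduced_syl b -> lmulA_syl 0 b s = (b, s).
Proof.
  induction b as [|[r e] rest IH]; intros s Hb; simpl.
  - f_equal; ring.
  - destruct Hb as [Hr [Hrest _]]. rewrite Z.add_0_r, Hr.
    rewrite (Z_div_eq0_of_mod_id r (tmod e)) by auto using tmod_neq0. simpl.
    rewrite IH by auto. reflexivity.
Qed.

Lemma lmulA_syl_reduced : forall b j s, reduced_syl b -> reduced_syl (fst (lmulA_syl j b s)).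
Proof.
  induction b as [|[r e] rest IH]; intros j s Hb; simpl; auto.
  destruct Hb as [_ [Hrest Hpinch]]. split; [|split].
  - apply Z.mod_mod, tmod_neq0.
  - apply IH; auto.
  - destruct rest as [|[r' e'] rest']; simpl; auto.
    simpl in Hpinch. intros [Hr He]. apply Hpinch. split; auto.
    subst e'. destruct Hrest as [Hr' _].
    replace (tmod (negb e)) with (tcarry e) in * by (destruct e; reflexivity).
    revert Hr. rewrite Z.mod_add, Hr'; auto.
    destruct e; simpl; auto.
Qed.

Definition rmulA (k : Z) (X : nform) : nform := (fst X, snd X + k).

Lemma lmul_rmulA w X k : lmul w (rmulA k X) = rmulA k (lmul w X).
Proof.
  assert (Hsyl : forall b j s, lmulA_syl j b (s + k) = rmulA k (lmulA_syl j b s)).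
  { induction b as [|[r e] rest IH]; intros j s; simpl.
    - unfold rmulA; simpl; f_equal; ring.
    - rewrite IH. reflexivity. }
  induction w as [|l w IH]; simpl; auto. rewrite IH.
  destruct (lmul w X) as [b s].
  destruct l as [[|] [|]]; unfold lmul_letter, lmulA, lmulT, lmulTi, rmulA; simpl;
    try (rewrite Hsyl; reflexivity);
    destruct b as [|[r [|]] rest]; simpl; auto; destruct (Z.eqb r 0); auto.
Qed.

Lemma lmulT_reduced X : reduced X -> reduced (lmulT X).
Proof.
  destruct X as [b s]; unfold reduced, lmulT; simpl.
  destruct b as [|[r [|]] rest]; simpl; intros Hb.
  - repeat split; auto.
  - destruct (Z.eqb r 0) eqn:Hr0; simpl.
    + tauto.
    + apply Z.eqb_neq in Hr0. repeat split; try tauto; intros [H _]; auto.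
  - repeat split; try tauto; intros [_ H]; discriminate.
Qed.

Lemma lmulTi_reduced X : reduced X -> reduced (lmulTi X).
Proof.
  destruct X as [b s]; unfold reduced, lmulTi; simpl.
  destruct b as [|[r [|]] rest]; simpl; intros Hb.
  - repeat split; auto.
  - repeat split; try tauto; intros [_ H]; discriminate.
  - destruct (Z.eqb r 0) eqn:Hr0; simpl.
    + tauto.
    + apply Z.eqb_neq in Hr0. repeat split; try tauto; intros [H _]; auto.
Qed.

Lemma lmul_reduced w X : reduced X -> reduced (lmul w X).
Proof.
  intros HX. induction w as [|[[|] [|]] w IH]; simpl; auto;
    solve [apply lmulA_syl_reduced; exact IH | auto using lmulT_reduced, lmulTi_reduced].
Qed.

Lemma nf_reduced w : reduced (nf w).
Proof. apply lmul_reduced. exact I. Qed.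

Lemma lmulT_lmulTi X : reduced X -> lmulT (lmulTi X) = X.
Proof.
  destruct X as [b s]; unfold reduced, lmulT, lmulTi; simpl.
  destruct b as [|[r [|]] rest]; simpl; intros Hb; auto.
  destruct (Z.eqb r 0) eqn:Hr0; simpl.
  - apply Z.eqb_eq in Hr0; subst r.
    destruct rest as [|[r' [|]] rest']; simpl; auto.
    destruct (Z.eqb r' 0) eqn:Hr'0; auto. apply Z.eqb_eq in Hr'0; subst.
    exfalso. destruct Hb as [_ [_ H]]. apply H; auto.
  - try rewrite Z.eqb_refl; reflexivity.
Qed.

Lemma lmulTi_lmulT X : reduced X -> lmulTi (lmulT X) = X.
Proof.
  destruct X as [b s]; unfold reduced, lmulT, lmulTi; simpl.
  destruct b as [|[r [|]] rest]; simpl; intros Hb; auto.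
  destruct (Z.eqb r 0) eqn:Hr0; simpl.
  - apply Z.eqb_eq in Hr0; subst r.
    destruct rest as [|[r' [|]] rest']; simpl; auto.
    destruct (Z.eqb r' 0) eqn:Hr'0; auto. apply Z.eqb_eq in Hr'0; subst.
    exfalso. destruct Hb as [_ [_ H]]. apply H; auto.
  - try rewrite Z.eqb_refl; reflexivity.
Qed.

Lemma lmulA_lmulA j j' X : lmulA j (lmulA j' X) = lmulA (j + j') X.
Proof. apply lmulA_syl_add. Qed.

Lemma lmulA_0 X : reduced X -> lmulA 0 X = X.
Proof. destruct X; apply lmulA_syl_0. Qed.

Lemma lmul_letter_inv l X : reduced X -> lmul_letter l (lmul_letter (inv_letter l) X) = X.
Proof.
  intros HX. destruct l as [[|] [|]]; simpl.
  - rewrite lmulA_lmulA. apply lmulA_0; auto.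
  - rewrite lmulA_lmulA. apply lmulA_0; auto.
  - apply lmulTi_lmulT; auto.
  - apply lmulT_lmulTi; auto.
Qed.

Lemma lmul_app u v X : lmul (u ++ v) X = lmul u (lmul v X).
Proof. apply fold_right_app. Qed.

Lemma lmul_gpowA k X : reduced X -> lmul (gpow GA k) X = lmulA k X.
Proof.
  intros HX. unfold gpow. destruct (0 <=? k) eqn:Hk.
  - apply Z.leb_le in Hk. rewrite <- (Z2Nat.id k) at 2 by auto.
    induction (Z.to_nat k) as [|N IH]; simpl.
    + symmetry; apply lmulA_0; auto.
    + rewrite IH, lmulA_lmulA. f_equal. lia.
  - apply Z.leb_gt in Hk. replace k with (- Z.of_nat (Z.to_nat (- k))) at 2 by lia.
    induction (Z.to_nat (-k)) as [|N IH]; simpl.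
    + symmetry; apply lmulA_0; auto.
    + rewrite IH, lmulA_lmulA. f_equal. lia.
Qed.

Lemma nf_gpowA k : nf (gpow GA k) = ([], k).
Proof. unfold nf. rewrite lmul_gpowA by exact I. reflexivity. Qed.

Lemma lmulTi_lmulA_n X : reduced X -> lmulTi (lmulA n X) = lmulA m (lmulTi X).
Proof.
  destruct X as [[|[r [|]] rest] s]; unfold reduced, lmulA, lmulTi;
    cbn [fst snd lmulA_syl tmod tcarry].
  - intros _. rewrite Z.add_0_l, Z.mod_same, Z.div_same by auto. f_equal. ring.
  - intros _. rewrite Z.add_0_l, Z.mod_same, Z.div_same, Z.mul_1_l by auto. reflexivity.
  - intros [Hr _]. cbn [tmod] in Hr.
    replace (r + n) with (r + 1 * n) by ring.
    rewrite Z.mod_add, Z.div_add, Hr, (Z_div_eq0_of_mod_id r n) by auto.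
    destruct (Z.eqb r 0); cbn [fst snd lmulA_syl tmod tcarry].
    + rewrite Z.add_0_l, Z.mul_1_l. destruct (lmulA_syl m rest s); reflexivity.
    + rewrite Z.add_0_l, Z.mod_same, Z.div_same, Z.mul_1_l by auto.
      replace (r + n) with (r + 1 * n) by ring.
      rewrite Z.mod_add, Z.div_add, Hr, (Z_div_eq0_of_mod_id r n), Z.add_0_l, Z.mul_1_l by auto.
      reflexivity.
Qed.


Lemma lmul_relator X : reduced X -> lmul (relator m n) X = X.
Proof.
  intros HX. unfold relator.
  change (lmulT (lmul (gpow GA m ++ (GT, true) :: gpow GA (- n)) X) = X).
  rewrite lmul_app.
  change (lmulT (lmul (gpow GA m) (lmulTi (lmul (gpow GA (- n)) X))) = X).
  set (Y := lmul (gpow GA (- n)) X).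
  assert (HY : reduced Y) by (apply lmul_reduced; exact HX).
  assert (HnY : lmulA n Y = X)
    by (unfold Y; rewrite lmul_gpowA, lmulA_lmulA, Z.add_opp_diag_r, lmulA_0 by auto; reflexivity).
  rewrite lmul_gpowA by (apply lmulTi_reduced; exact HY).
  rewrite <- lmulTi_lmulA_n, HnY by exact HY.
  apply lmulT_lmulTi; exact HX.
Qed.

Lemma bs_step_nf u v : bs_step m n u v -> nf u = nf v.
Proof.
  intros H. destruct H; unfold nf; rewrite !lmul_app.
  - f_equal. exact (lmul_letter_inv l _ (nf_reduced v)).
  - rewrite lmul_relator by apply nf_reduced. reflexivity.
Qed.

Lemma bs_eq_nf u v : bs_eq m n u v -> nf u = nf v.
Proof. intros H. induction H; auto using bs_step_nf. congruence. Qed.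

End NormalForm.

Fixpoint texp (w : word) : Z :=
  match w with
  | [] => 0
  | (GT, false) :: w' => 1 + texp w'
  | (GT, true) :: w' => -1 + texp w'
  | _ :: w' => texp w'
  end.

Lemma texp_app u v : texp (u ++ v) = texp u + texp v.
Proof. induction u as [|[[|] [|]] u IH]; cbn [texp app]; try rewrite IH; ring. Qed.

Lemma texp_gpow x k : texp (gpow x k) = match x with GA => 0 | GT => k end.
Proof.
  unfold gpow. destruct (0 <=? k) eqn:Hk.
  - apply Z.leb_le in Hk. destruct x.
    + induction (Z.to_nat k); simpl; auto.
    + rewrite <- (Z2Nat.id k) at 2 by auto.
      induction (Z.to_nat k) as [|N IH]; cbn [repeat texp]; auto. lia.
  - apply Z.leb_gt in Hk. destruct x.
    + induction (Z.to_nat (- k)); simpl; auto.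
    + replace k with (- Z.of_nat (Z.to_nat (- k))) at 2 by lia.
      induction (Z.to_nat (-k)) as [|N IH]; cbn [repeat texp]; auto. lia.
Qed.

Lemma bs_eq_texp m n u v : bs_eq m n u v -> texp u = texp v.
Proof.
  intros H; induction H as [u v H| | |]; auto; try congruence.
  destruct H; rewrite !texp_app; cbn [texp].
  - destruct l as [[|] [|]]; cbn [texp inv_letter fst snd negb]; ring.
  - unfold relator. cbn [texp]. rewrite !texp_app. cbn [texp]. rewrite !texp_gpow. ring.
Qed.

Add Parametric Relation (m n : Z) : word (bs_eq m n)
  reflexivity proved by (fun x => rst_refl _ _ x)
  symmetry proved by (fun x y => rst_sym _ _ x y)
  transitivity proved by (fun x y z => rst_trans _ _ x y z)
  as bs_eq_rel.

Section Congruence.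
Variables m n : Z.
Local Notation "u ≡ v" := (bs_eq m n u v) (at level 70).

Lemma bs_step_ctx p q u v : bs_step m n u v -> bs_step m n (p ++ u ++ q) (p ++ v ++ q).
Proof.
  intros H; destruct H;
    replace (p ++ (u ++ v) ++ q) with ((p ++ u) ++ (v ++ q))
      by (rewrite <- !app_assoc; reflexivity).
  - replace (p ++ (u ++ l :: inv_letter l :: v) ++ q)
      with ((p ++ u) ++ l :: inv_letter l :: (v ++ q)) by (rewrite <- !app_assoc; reflexivity).
    constructor.
  - replace (p ++ (u ++ relator m n ++ v) ++ q)
      with ((p ++ u) ++ relator m n ++ (v ++ q)) by (rewrite <- !app_assoc; reflexivity).
    constructor.
Qed.

Lemma bs_eq_ctx p q u v : u ≡ v -> p ++ u ++ q ≡ p ++ v ++ q.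
Proof.
  intros H; induction H.
  - apply rst_step, bs_step_ctx; auto.
  - reflexivity.
  - symmetry; auto.
  - etransitivity; eauto.
Qed.

Global Add Parametric Morphism : (@app letter)
  with signature (bs_eq m n) ==> (bs_eq m n) ==> (bs_eq m n) as app_bs_eq.
Proof.
  intros u u' Hu v v' Hv. transitivity (u' ++ v).
  - exact (bs_eq_ctx [] v u u' Hu).
  - pose proof (bs_eq_ctx u' [] v v' Hv) as H. rewrite !app_nil_r in H. exact H.
Qed.

Global Add Parametric Morphism (l : letter) : (cons l)
  with signature (bs_eq m n) ==> (bs_eq m n) as cons_bs_eq.
Proof.
  intros u u' Hu. pose proof (bs_eq_ctx [l] [] u u' Hu) as H. rewrite !app_nil_r in H. exact H.
Qed.

Global Add Parametric Morphism (v : vertex) : (line m n v)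
  with signature (bs_eq m n) ==> iff as line_bs_eq.
Proof.
  intros h h' Hh. unfold line.
  split; intros [k Hk]; exists k; [rewrite <- Hh | rewrite Hh]; exact Hk.
Qed.

Lemma bs_eq_free l w : l :: inv_letter l :: w ≡ w.
Proof. apply rst_step. apply (step_free m n [] w l). Qed.

Lemma gpow_succ x k : gpow x (k + 1) ≡ (x, false) :: gpow x k.
Proof.
  unfold gpow. destruct (Z_lt_le_dec k (-1)) as [H|H].
  - destruct (0 <=? k + 1) eqn:H1; [apply Z.leb_le in H1; lia|].
    destruct (0 <=? k) eqn:H2; [apply Z.leb_le in H2; lia|].
    replace (Z.to_nat (- k)) with (S (Z.to_nat (- (k + 1)))) by lia. simpl.
    symmetry. apply (bs_eq_free (x, false)).
  - destruct (Z.eq_dec k (-1)) as [->|H'].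
    + simpl. symmetry. apply (bs_eq_free (x, false) []).
    + destruct (0 <=? k + 1) eqn:H1; [|apply Z.leb_gt in H1; lia].
      destruct (0 <=? k) eqn:H2; [|apply Z.leb_gt in H2; lia].
      replace (Z.to_nat (k + 1)) with (S (Z.to_nat k)) by lia. reflexivity.
Qed.

Lemma gpow_pred x k : gpow x (k - 1) ≡ (x, true) :: gpow x k.
Proof.
  unfold gpow. destruct (Z_lt_le_dec 1 k) as [H|H].
  - destruct (0 <=? k - 1) eqn:H1; [|apply Z.leb_gt in H1; lia].
    destruct (0 <=? k) eqn:H2; [|apply Z.leb_gt in H2; lia].
    replace (Z.to_nat k) with (S (Z.to_nat (k - 1))) by lia. simpl.
    symmetry. apply (bs_eq_free (x, true)).
  - destruct (Z.eq_dec k 1) as [->|H'].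
    + simpl. symmetry. apply (bs_eq_free (x, true) []).
    + destruct (0 <=? k - 1) eqn:H1; [apply Z.leb_le in H1; lia|].
      destruct (0 <=? k) eqn:H2.
      * apply Z.leb_le in H2. assert (k = 0) by lia. subst. reflexivity.
      * replace (Z.to_nat (- (k - 1))) with (S (Z.to_nat (- k))) by lia. reflexivity.
Qed.

Lemma gpow_add x i j : gpow x i ++ gpow x j ≡ gpow x (i + j).
Proof.
  induction i using Z.peano_ind.
  - reflexivity.
  - rewrite <- Z.add_1_r, gpow_succ. simpl. rewrite IHi.
    replace (i + 1 + j) with ((i + j) + 1) by ring. rewrite gpow_succ. reflexivity.
  - rewrite <- Z.sub_1_r, gpow_pred. simpl. rewrite IHi.
    replace (i - 1 + j) with ((i + j) - 1) by ring. rewrite gpow_pred. reflexivity.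
Qed.

Lemma gpow_add_r x i j w : gpow x i ++ gpow x j ++ w ≡ gpow x (i + j) ++ w.
Proof. rewrite app_assoc, gpow_add. reflexivity. Qed.

Lemma bs_eq_relator w : w ≡ relator m n ++ w.
Proof. symmetry. apply rst_step. apply (step_rel m n [] w). Qed.

Lemma gpowA_tmod_T e w :
  gpow GA (tmod m n e) ++ (GT, e) :: w ≡ (GT, e) :: gpow GA (tcarry m n e) ++ w.
Proof.
  destruct e; cbn [tmod tcarry].
  - rewrite (bs_eq_relator (gpow GA n ++ w)). unfold relator.
    simpl. rewrite <- !app_assoc. simpl. rewrite gpow_add_r, Z.add_opp_diag_l.
    rewrite (bs_eq_free (GT, true)). reflexivity.
  - rewrite (bs_eq_relator (gpow GA n ++ (GT, false) :: w)). unfold relator.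
    simpl. rewrite <- !app_assoc. simpl. rewrite gpow_add_r, Z.add_opp_diag_l.
    rewrite (bs_eq_free (GT, true) w). reflexivity.
Qed.

Lemma gpowA_tmod_mul_T e : forall k w,
  gpow GA (tmod m n e * k) ++ (GT, e) :: w ≡ (GT, e) :: gpow GA (tcarry m n e * k) ++ w.
Proof.
  intros k. induction k using Z.peano_ind; intros w.
  - rewrite !Z.mul_0_r. reflexivity.
  - rewrite <- Z.add_1_r, !Z.mul_add_distr_l, !Z.mul_1_r.
    rewrite <- gpow_add_r, gpowA_tmod_T, IHk, gpow_add_r. reflexivity.
  - rewrite <- Z.sub_1_r, !Z.mul_sub_distr_l, !Z.mul_1_r.
    transitivity (gpow GA (tmod m n e * k - tmod m n e) ++ (GT, e) ::
                    gpow GA (tcarry m n e) ++ gpow GA (- tcarry m n e) ++ w).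
    { rewrite gpow_add_r, Z.add_opp_diag_r. reflexivity. }
    rewrite <- gpowA_tmod_T, gpow_add_r.
    replace (tmod m n e * k - tmod m n e + tmod m n e) with (tmod m n e * k) by ring.
    rewrite IHk, gpow_add_r, Z.add_opp_r. reflexivity.
Qed.

End Congruence.

Fixpoint syl_word (b : list (Z * bool)) : word :=
  match b with [] => [] | (r, e) :: rest => gpow GA r ++ (GT, e) :: syl_word rest end.

Definition nf_word (X : nform) : word := syl_word (fst X) ++ gpow GA (snd X).

Definition winv (w : word) : word := rev (map inv_letter w).

Lemma winv_involutive w : winv (winv w) = w.
Proof.
  unfold winv. rewrite map_rev, rev_involutive, map_map.
  rewrite <- (map_id w) at 2. apply map_ext. intros [x b].
  unfold inv_letter; simpl. rewrite Bool.negb_involutive. reflexivity.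
Qed.

Section Injectivity.
Variables m n : Z.
Hypothesis m_neq0 : m <> 0.
Hypothesis n_neq0 : n <> 0.
Local Notation "u ≡ v" := (bs_eq m n u v) (at level 70).

Lemma lmulA_syl_word : forall b j s,
  gpow GA j ++ syl_word b ++ gpow GA s ≡ nf_word (lmulA_syl m n j b s).
Proof.
  induction b as [|[r e] rest IH]; intros j s; unfold nf_word in *.
  - simpl. rewrite gpow_add, Z.add_comm. reflexivity.
  - cbn [lmulA_syl syl_word fst snd]. rewrite <- !app_assoc. cbn [app].
    rewrite gpow_add_r.
    pose proof (tmod_neq0 m n m_neq0 n_neq0 e) as HN.
    assert (Hdiv : j + r = (r + j) mod tmod m n e + tmod m n e * ((r + j) / tmod m n e))
      by (pose proof (Z.div_mod (r + j) (tmod m n e) HN); lia).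
    rewrite Hdiv, <- gpow_add_r, gpowA_tmod_mul_T, IH, (Z.mul_comm (tcarry m n e)).
    reflexivity.
Qed.

Lemma lmul_letter_word l X :
  reduced m n X -> l :: nf_word X ≡ nf_word (lmul_letter m n l X).
Proof.
  intros HX. destruct X as [b s]. unfold nf_word. cbn [fst snd].
  destruct l as [[|] [|]].
  - exact (lmulA_syl_word b (-1) s).
  - exact (lmulA_syl_word b 1 s).
  - unfold lmul_letter, lmulTi. cbn [fst snd].
    destruct b as [|[r [|]] rest]; try reflexivity.
    destruct (Z.eqb r 0) eqn:Hr0; [|reflexivity].
    apply Z.eqb_eq in Hr0; subst r. apply (bs_eq_free m n (GT, true)).
  - unfold lmul_letter, lmulT. cbn [fst snd].
    destruct b as [|[r [|]] rest]; try reflexivity.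
    destruct (Z.eqb r 0) eqn:Hr0; [|reflexivity].
    apply Z.eqb_eq in Hr0; subst r. apply (bs_eq_free m n (GT, false)).
Qed.

Lemma bs_eq_nf_word w : w ≡ nf_word (nf m n w).
Proof.
  induction w as [|l w IH]; [reflexivity|].
  rewrite IH at 1. apply lmul_letter_word, nf_reduced; auto.
Qed.

Lemma bs_eq_iff_nf u v : u ≡ v <-> nf m n u = nf m n v.
Proof.
  split; [apply bs_eq_nf; auto|].
  intros H. rewrite (bs_eq_nf_word u), (bs_eq_nf_word v), H. reflexivity.
Qed.

End Injectivity.

Section Inverses.
Variables m n : Z.
Local Notation "u ≡ v" := (bs_eq m n u v) (at level 70).

Lemma app_winv w : w ++ winv w ≡ [].
Proof.
  induction w as [|l w IH]; [reflexivity|].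
  unfold winv in *. simpl. rewrite app_assoc, IH. apply (bs_eq_free m n l []).
Qed.

Lemma winv_app w : winv w ++ w ≡ [].
Proof. rewrite <- (winv_involutive w) at 2. apply app_winv. Qed.

Lemma bs_eq_cancel_l g u v : g ++ u ≡ g ++ v -> u ≡ v.
Proof.
  intros H.
  transitivity ((winv g ++ g) ++ u); [rewrite winv_app; reflexivity|].
  transitivity ((winv g ++ g) ++ v); [rewrite <- !app_assoc, H; reflexivity|].
  rewrite winv_app. reflexivity.
Qed.

End Inverses.

Fixpoint fwd_word (ks : list Z) : word :=
  match ks with [] => [] | k :: ks => gpow GA k ++ (GT, false) :: fwd_word ks end.

Section Lines.
Variables m n : Z.
Hypothesis m_neq0 : m <> 0.
Hypothesis n_neq0 : n <> 0.
Local Notation "u ≡ v" := (bs_eq m n u v) (at level 70).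
Local Notation nf := (nf m n).

Lemma nf_app u v : nf (u ++ v) = lmul m n u (nf v).
Proof. apply lmul_app. Qed.

Lemma nf_gpowA_r u k : nf (u ++ gpow GA k) = rmulA k (nf u).
Proof.
  rewrite nf_app, nf_gpowA by auto.
  change ([], k) with (rmulA k nf1). apply lmul_rmulA.
Qed.

Lemma coset_gpowA_r u k : fst (nf (u ++ gpow GA k)) = fst (nf u).
Proof. rewrite nf_gpowA_r. reflexivity. Qed.

Lemma bs_eq_of_coset u v :
  fst (nf u) = fst (nf v) -> u ≡ v ++ gpow GA (snd (nf u) - snd (nf v)).
Proof.
  intros H. apply bs_eq_iff_nf; auto. rewrite nf_gpowA_r. unfold rmulA.
  destruct (nf u) as [bu su], (nf v) as [bv sv]; simpl in *. subst. f_equal. ring.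
Qed.

Lemma coset_of_bs_eq u v k : u ≡ v ++ gpow GA k -> fst (nf u) = fst (nf v).
Proof. intros H. apply (bs_eq_nf m n m_neq0 n_neq0) in H. rewrite H, nf_gpowA_r. reflexivity. Qed.

Lemma coset_bs_eq u v : u ≡ v -> fst (nf u) = fst (nf v).
Proof. intros H. apply (bs_eq_nf m n m_neq0 n_neq0) in H. congruence. Qed.

Lemma texp_coset u v : fst (nf u) = fst (nf v) -> texp u = texp v.
Proof.
  intros H. apply bs_eq_of_coset, bs_eq_texp in H. rewrite H, texp_app, texp_gpow. ring.
Qed.

Lemma coset_cancel_l g u v : fst (nf (g ++ u)) = fst (nf (g ++ v)) -> fst (nf u) = fst (nf v).
Proof.
  intros H. apply bs_eq_of_coset in H. rewrite <- app_assoc in H.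
  apply bs_eq_cancel_l in H. eapply coset_of_bs_eq; eauto.
Qed.

Lemma coset_app_l g u v : fst (nf u) = fst (nf v) -> fst (nf (g ++ u)) = fst (nf (g ++ v)).
Proof.
  intros H. apply bs_eq_of_coset in H. set (k := snd (nf u) - snd (nf v)) in H. clearbody k.
  apply (coset_of_bs_eq _ _ k). rewrite H, app_assoc. reflexivity.
Qed.

Lemma line_typeA v h : vty v = TypeA -> (line m n v h <-> fst (nf h) = fst (nf (vrep v))).
Proof.
  intros Hv. unfold line. rewrite Hv. simpl. split.
  - intros [k Hk]. eapply coset_of_bs_eq; eauto.
  - intros H. eexists. apply bs_eq_of_coset; auto.
Qed.

Lemma line_typeT v h : vty v = TypeT -> (line m n v h <-> exists k, h ≡ vrep v ++ gpow GT k).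
Proof. intros Hv. unfold line. rewrite Hv. reflexivity. Qed.

Lemma vsame_refl v : vsame m n v v.
Proof. split; tauto. Qed.

Lemma vsame_sym u v : vsame m n u v -> vsame m n v u.
Proof. intros [H1 H2]; split; [auto|intros h; rewrite H2; tauto]. Qed.

Lemma vsame_trans u v w : vsame m n u v -> vsame m n v w -> vsame m n u w.
Proof. intros [H1 H2] [H3 H4]; split; [congruence|intros h; rewrite H2, H4; tauto]. Qed.

Lemma vsame_typeA r r' : fst (nf r) = fst (nf r') -> vsame m n (Vtx TypeA r) (Vtx TypeA r').
Proof.
  intros H. split; auto. intros h. rewrite !line_typeA by reflexivity. simpl. rewrite H. tauto.
Qed.

Lemma not_vsame_typeA_typeT u w : vty u = TypeA -> vty w = TypeT -> ~ vsame m n u w.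
Proof. intros H1 H2 [H _]. congruence. Qed.

Lemma adjL_typeA_typeT u w : vty u = TypeA -> adjL m n u w -> vty w = TypeT.
Proof.
  intros Hu [Hns [h [H1 H2]]]. destruct (vty w) eqn:Hw; auto. exfalso. apply Hns.
  split; [congruence|]. intros h'. rewrite !line_typeA by auto.
  rewrite line_typeA in H1, H2 by auto. rewrite H1 in H2. rewrite H2. tauto.
Qed.

Lemma Tadj_vsame_l x x' z : vsame m n x x' -> Tadj m n x z -> Tadj m n x' z.
Proof.
  intros [Hty Hline] [[Hx [Hz [g [Hg1 Hg2]]]]|[Hz [Hx [g [Hg1 Hg2]]]]].
  - left. split; [congruence|split; auto]. exists g; split; auto. apply Hline; auto.
  - right. split; [auto|split; [congruence|]]. exists g; split; auto. apply Hline; auto.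
Qed.

Lemma is_walk_vsame_r x xs y y' : is_walk m n x xs y -> vsame m n y y' -> is_walk m n x xs y'.
Proof.
  revert x. induction xs as [|z zs IH]; simpl; intros x H1 H2.
  - eapply vsame_trans; eauto.
  - destruct H1; split; eauto.
Qed.

Lemma is_walk_vsame_l x x' xs y : vsame m n x x' -> is_walk m n x' xs y -> is_walk m n x xs y.
Proof.
  destruct xs as [|z zs]; simpl; intros H1 H2.
  - eapply vsame_trans; eauto.
  - destruct H2; split; auto. eapply Tadj_vsame_l; eauto. apply vsame_sym; auto.
Qed.

Lemma is_walk_word : forall w r, exists xs, is_walk m n (Vtx TypeA r) xs (Vtx TypeA (r ++ w)).
Proof.
  induction w as [|l w IH]; intros r.
  - exists []. simpl. rewrite app_nil_r. apply vsame_refl.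
  - destruct (IH (r ++ [l])) as [xs Hxs]. rewrite <- app_assoc in Hxs. simpl in Hxs.
    destruct l as [[|] [|]].
    + exists xs. eapply is_walk_vsame_l; [|exact Hxs]. apply vsame_typeA.
      exact (eq_sym (coset_gpowA_r r (-1))).
    + exists xs. eapply is_walk_vsame_l; [|exact Hxs]. apply vsame_typeA.
      exact (eq_sym (coset_gpowA_r r 1)).
    + exists (Vtx TypeA (r ++ [(GT, true)]) :: xs). split; auto.
      right. split; [reflexivity|split; [reflexivity|]].
      exists (r ++ [(GT, true)]). split; apply line_typeA; try reflexivity.
      simpl. apply coset_bs_eq. rewrite <- app_assoc.
      rewrite (bs_eq_free m n (GT, true) []), app_nil_r. reflexivity.
    + exists (Vtx TypeA (r ++ [(GT, false)]) :: xs). split; auto.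
      left. split; [reflexivity|split; [reflexivity|]].
      exists r. split; apply line_typeA; reflexivity.
Qed.

Lemma is_walk_exists u v : vty u = TypeA -> vty v = TypeA -> exists xs, is_walk m n u xs v.
Proof.
  intros Hu Hv. destruct (is_walk_word (winv (vrep u) ++ vrep v) (vrep u)) as [xs Hxs].
  exists xs. eapply is_walk_vsame_l; [|eapply is_walk_vsame_r; [exact Hxs|]].
  - destruct u as [ty r]; simpl in *; subst. apply vsame_refl.
  - destruct v as [ty r]; simpl in *; subst. apply vsame_typeA, coset_bs_eq.
    rewrite app_assoc, app_winv. reflexivity.
Qed.

Lemma geodesic_exists x y xs0 : is_walk m n x xs0 y -> exists xs, geodesic m n x xs y.
Proof.
  intros H0. remember (length xs0) as N. assert (HN : (length xs0 <= N)%nat) by lia. clear HeqN.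
  revert xs0 H0 HN. induction N as [N IH] using lt_wf_ind. intros xs0 H0 HN.
  destruct (classic (exists ys, is_walk m n x ys y /\ (length ys < length xs0)%nat))
    as [[ys [H1 H2]]|H1].
  - apply (IH (length ys)) with ys; auto. lia.
  - exists xs0. split; auto. intros ys Hys.
    destruct (Nat.le_gt_cases (length xs0) (length ys)); auto.
    exfalso. apply H1. eauto.
Qed.

Lemma all_fwd_line : forall xs x y, all_fwd m n x xs -> is_walk m n x xs y -> vty x = TypeA ->
  forall r, line m n x r ->
  exists ks, length ks = length xs /\ fst (nf (vrep y)) = fst (nf (r ++ fwd_word ks)).
Proof.
  induction xs as [|z zs IH]; intros x y Hf Hw Hx r Hr.
  - exists []. split; auto. simpl. rewrite app_nil_r.
    destruct Hw as [Ht Hl]. apply Hl, line_typeA in Hr; [|congruence].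
    symmetry; auto.
  - destruct Hf as [[_ [Hz [g0 [Hg1 Hg2]]]] Hf]. destruct Hw as [_ Hw].
    apply line_typeA in Hg1, Hr; auto.
    assert (Hg : fst (nf g0) = fst (nf r)) by congruence.
    apply bs_eq_of_coset in Hg. set (i := snd (nf g0) - snd (nf r)) in Hg.
    assert (Hr' : line m n z (r ++ gpow GA i ++ [(GT, false)])).
    { apply line_typeA; auto. apply line_typeA in Hg2; auto. rewrite <- Hg2.
      apply coset_bs_eq. rewrite Hg, <- app_assoc. reflexivity. }
    destruct (IH z y Hf Hw Hz _ Hr') as [ks [Hl He]].
    exists (i :: ks). split; simpl; auto. rewrite He, <- !app_assoc. reflexivity.
Qed.

Lemma Tlt_line u v r : Tlt m n u v -> line m n u r ->
  exists ks, (1 <= length ks)%nat /\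
    forall h, line m n v h <-> fst (nf h) = fst (nf (r ++ fwd_word ks)).
Proof.
  intros [[Hu [Hv Hle]] Hns] Hr.
  destruct (is_walk_exists u v Hu Hv) as [xs0 H0].
  destruct (geodesic_exists _ _ _ H0) as [xs [Hw Hmin]].
  destruct (all_fwd_line xs u v (Hle xs (conj Hw Hmin)) Hw Hu r Hr) as [ks [Hl He]].
  exists ks. split.
  - destruct xs; simpl in *; [contradiction|lia].
  - intros h. rewrite line_typeA, He by auto. reflexivity.
Qed.

Lemma line_vrep v : line m n v (vrep v).
Proof. unfold line. exists 0. simpl. rewrite app_nil_r. reflexivity. Qed.

Lemma line_typeT_app w h k : vty w = TypeT -> line m n w h -> line m n w (h ++ gpow GT k).
Proof.
  intros Hw Hh. apply line_typeT in Hh as [j Hj]; auto.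
  apply line_typeT; auto. exists (j + k). rewrite Hj, <- app_assoc, gpow_add. reflexivity.
Qed.

Lemma line_typeT_diff w h h' : vty w = TypeT -> line m n w h -> line m n w h' ->
  h' ≡ h ++ gpow GT (texp h' - texp h).
Proof.
  intros Hw Hh Hh'. apply line_typeT in Hh as [k Hk], Hh' as [k' Hk']; auto.
  pose proof (bs_eq_texp m n _ _ Hk) as Tk. pose proof (bs_eq_texp m n _ _ Hk') as Tk'.
  rewrite texp_app, texp_gpow in Tk, Tk'.
  replace (texp h' - texp h) with (k' - k) by lia.
  rewrite Hk, Hk', <- app_assoc, gpow_add, Zplus_minus. reflexivity.
Qed.

End Lines.

Definition tpow (k : nat) : word := repeat (GT, false) k.
Definition tnpow (k : nat) : word := repeat (GT, true) k.
Definition zeros (k : nat) : list (Z * bool) := repeat (0, false) k.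
Definition ones (k : nat) : list (Z * bool) := repeat (0, true) k.

Lemma gpowT_of_nat k : gpow GT (Z.of_nat k) = tpow k.
Proof. unfold gpow. rewrite (proj2 (Z.leb_le _ _)) by lia. rewrite Nat2Z.id. reflexivity. Qed.

Lemma gpowT_opp_nat k : gpow GT (- Z.of_nat k) = tnpow k.
Proof.
  destruct k as [|k]; [reflexivity|]. unfold gpow.
  rewrite (proj2 (Z.leb_gt _ _)) by lia. rewrite Z.opp_involutive, Nat2Z.id. reflexivity.
Qed.

Lemma tpow_add p q : tpow (p + q) = tpow p ++ tpow q.
Proof. apply repeat_app. Qed.

Lemma texp_tpow k : texp (tpow k) = Z.of_nat k.
Proof. rewrite <- gpowT_of_nat, texp_gpow. reflexivity. Qed.

Lemma texp_fwd_word ks : texp (fwd_word ks) = Z.of_nat (length ks).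
Proof.
  induction ks as [|k ks IH]; [reflexivity|]. cbn [fwd_word length].
  rewrite texp_app. cbn [texp]. rewrite texp_gpow, IH. lia.
Qed.

Lemma fwd_word_zeros q : fwd_word (repeat 0 q) = tpow q.
Proof. induction q as [|q IH]; simpl; auto. rewrite IH. reflexivity. Qed.

Section TPowers.
Variables m n : Z.
Hypothesis m_neq0 : m <> 0.
Hypothesis n_neq0 : n <> 0.
Local Notation "u ≡ v" := (bs_eq m n u v) (at level 70).
Local Notation nf := (nf m n).

Fixpoint passT (k : nat) (j : Z) : Prop :=
  match k with O => True | S k => j mod n = 0 /\ passT k (j / n * m) end.

Fixpoint conjT_inA (k : nat) (j : Z) : Prop :=
  match k with O => True | S k => j mod m = 0 /\ conjT_inA k (j / m * n) end.

Definition t_no_cancel (X : nform) : Prop :=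
  match fst X with (r, true) :: _ => r <> 0 | _ => True end.

Lemma lmul_tpow k X : t_no_cancel X -> lmul m n (tpow k) X = (zeros k ++ fst X, snd X).
Proof.
  intros HX. induction k as [|k IH]; [destruct X; reflexivity|].
  change (lmulT (lmul m n (tpow k) X) = (zeros (S k) ++ fst X, snd X)).
  rewrite IH. unfold lmulT. cbn [fst snd].
  destruct k as [|k]; [|reflexivity].
  destruct X as [[|[r [|]] b] s]; simpl in *; auto.
  destruct (Z.eqb r 0) eqn:Hr0; auto. apply Z.eqb_eq in Hr0. contradiction.
Qed.

Lemma nf_tpow k : nf (tpow k) = (zeros k, 0).
Proof. unfold nf. rewrite lmul_tpow by exact I. simpl. rewrite app_nil_r. reflexivity. Qed.

Lemma nf_tnpow k : nf (tnpow k) = (ones k, 0).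
Proof.
  induction k as [|k IH]; [reflexivity|].
  change (lmulTi (nf (tnpow k)) = (ones (S k), 0)). rewrite IH.
  destruct k; reflexivity.
Qed.

Lemma reduced_zeros k s : reduced m n (zeros k, s).
Proof.
  unfold reduced, zeros. simpl. induction k as [|k IH]; simpl; auto.
  repeat split; auto. destruct k; simpl; auto. intros [_ H]; discriminate.
Qed.

Lemma reduced_ones k s : reduced m n (ones k, s).
Proof.
  unfold reduced, ones. simpl. induction k as [|k IH]; simpl; auto.
  repeat split; auto. destruct k; simpl; auto. intros [_ H]; discriminate.
Qed.

Lemma lmulA_zeros_passT k : forall j s,
  (exists f, lmulA_syl m n j (zeros k) s = (zeros k, f)) <-> passT k j.
Proof.
  induction k as [|k IH]; intros j s.
  - simpl. split; eauto.
  - unfold zeros in *. simpl repeat. cbn [lmulA_syl tmod tcarry passT]. rewrite Z.add_0_l. split.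
    + intros [f Hf]. injection Hf as H1 H2. split; auto.
      apply (IH _ s). exists f. rewrite <- H2 at 2.
      destruct (lmulA_syl m n _ _ _); simpl in *; subst; auto.
    + intros [H1 H2]. apply (IH _ s) in H2. destruct H2 as [f Hf].
      exists f. rewrite Hf, H1. reflexivity.
Qed.

Lemma lmul_tpow_ones_conjT_inA k : forall j s,
  (exists f, lmul m n (tpow k) (lmulA_syl m n j (ones k) s) = ([], f)) <-> conjT_inA k j.
Proof.
  induction k as [|k IH]; intros j s.
  - simpl. split; eauto.
  - unfold ones in *. simpl repeat. cbn [lmulA_syl tmod tcarry conjT_inA]. rewrite Z.add_0_l.
    unfold tpow. cbn [repeat]. rewrite repeat_cons, lmul_app. fold (tpow k). simpl lmul.
    unfold lmulT. cbn [fst snd].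
    destruct (Z.eqb (j mod m) 0) eqn:Hj.
    + apply Z.eqb_eq in Hj. rewrite <- (IH _ s).
      destruct (lmulA_syl m n _ _ _). split; [intros Hf; split|intros [_ Hf]]; auto.
    + apply Z.eqb_neq in Hj. split; [|intros [H _]; contradiction].
      intros [f Hf]. rewrite lmul_tpow in Hf by exact I. apply (f_equal fst) in Hf.
      destruct k; discriminate.
Qed.

Lemma passT_spec k j : passT k j <-> exists f, gpow GA j ++ tpow k ≡ tpow k ++ gpow GA f.
Proof.
  rewrite <- (lmulA_zeros_passT k j 0).
  assert (Hnf : forall f, gpow GA j ++ tpow k ≡ tpow k ++ gpow GA f <->
                          lmulA_syl m n j (zeros k) 0 = (zeros k, f)).
  { intros f.
    rewrite bs_eq_iff_nf, !nf_app, nf_tpow, nf_gpowA, lmul_gpowA by auto using reduced_zeros.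
    rewrite lmul_tpow by exact I. simpl. rewrite app_nil_r. reflexivity. }
  split; intros [f Hf]; exists f; apply Hnf; exact Hf.
Qed.

Lemma conjT_inA_spec k j :
  conjT_inA k j <-> exists f, tpow k ++ gpow GA j ++ tnpow k ≡ gpow GA f.
Proof.
  rewrite <- (lmul_tpow_ones_conjT_inA k j 0).
  assert (Hnf : forall f, tpow k ++ gpow GA j ++ tnpow k ≡ gpow GA f <->
                          lmul m n (tpow k) (lmulA_syl m n j (ones k) 0) = ([], f)).
  { intros f.
    rewrite bs_eq_iff_nf, !nf_app, nf_tnpow, nf_gpowA, lmul_gpowA by auto using reduced_ones.
    reflexivity. }
  split; intros [f Hf]; exists f; apply Hnf; exact Hf.
Qed.

Lemma passT_coset k j : passT k j <-> fst (nf (gpow GA j ++ tpow k)) = fst (nf (tpow k)).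
Proof.
  rewrite passT_spec by auto. split.
  - intros [f Hf]. rewrite (coset_bs_eq m n m_neq0 n_neq0 _ _ Hf), coset_gpowA_r by auto.
    reflexivity.
  - intros H. eexists. exact (bs_eq_of_coset m n m_neq0 n_neq0 _ _ H).
Qed.

End TPowers.

Lemma gcd_factor m n : m <> 0 ->
  exists d m' n', 0 < d <= Z.abs m /\ m = d * m' /\ n = d * n' /\ Z.gcd m' n' = 1.
Proof.
  intros Hm. set (d := Z.gcd m n).
  assert (Hd : 0 < d).
  { pose proof (Z.gcd_nonneg m n) as Hnn. destruct (Z.eq_dec d 0) as [H|H]; [|lia].
    apply Z.gcd_eq_0 in H. lia. }
  exists d, (m / d), (n / d). repeat split.
  - exact Hd.
  - apply Z.divide_pos_le; [lia|]. apply Z.divide_abs_r, Z.gcd_divide_l.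
  - apply Z.div_exact; [lia|]. apply Z.mod_divide; [lia|]. apply Z.gcd_divide_l.
  - apply Z.div_exact; [lia|]. apply Z.mod_divide; [lia|]. apply Z.gcd_divide_r.
  - apply Z.gcd_div_gcd; [lia|reflexivity].
Qed.

Lemma coprime_divide_pow a b k : Z.gcd a b = 1 -> (a | b ^ Z.of_nat k) -> (a | 1).
Proof.
  intros Hab. induction k as [|k IH]; [auto|].
  rewrite Nat2Z.inj_succ, Z.pow_succ_r by lia.
  intros H. apply IH. eapply Z.gauss; eauto.
Qed.

Section Passing.
Variables m n : Z.
Hypothesis m_neq0 : m <> 0.
Hypothesis n_neq0 : n <> 0.

(* a^(d n'^k c) t^k = t^k a^(d m'^k c): each t turns one factor n' into m'. *)
Lemma passT_scaled d m' n' : m = d * m' -> n = d * n' ->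
  forall k r c,
    passT m n (k + r) (d * n' ^ Z.of_nat k * c) <-> passT m n r (d * m' ^ Z.of_nat k * c).
Proof.
  intros Em En. induction k as [|k IH]; intros r c; [reflexivity|].
  rewrite Nat2Z.inj_succ, !Z.pow_succ_r by lia. cbn [Nat.add passT].
  replace (d * (n' * n' ^ Z.of_nat k) * c) with ((n' ^ Z.of_nat k * c) * n) by (rewrite En; ring).
  rewrite Z.mod_mul, Z.div_mul by auto.
  replace (n' ^ Z.of_nat k * c * m) with (d * n' ^ Z.of_nat k * (m' * c)) by (rewrite Em; ring).
  rewrite IH.
  replace (d * (m' * m' ^ Z.of_nat k) * c) with (d * m' ^ Z.of_nat k * (m' * c)) by ring.
  split; [intros [_ H] | intros H; split]; easy.
Qed.

Lemma passT_S_divide k j : passT m n (S k) j -> (n | j).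
Proof. simpl. intros [H _]. apply Z.mod_divide; auto. Qed.

Lemma conjT_inA_of_divide : (m | n) -> forall k j, (m | j) -> conjT_inA m n k j.
Proof.
  intros Hmn k. induction k as [|k IH]; intros j Hj; simpl; auto.
  split; [apply Z.mod_divide; auto|]. apply IH, Z.divide_mul_r, Hmn.
Qed.

Lemma conjT_inA_of_passT p q c :
  (m | n) -> (1 <= q)%nat -> passT m n q c -> conjT_inA m n p c.
Proof.
  intros Hmn Hq H. destruct q as [|q]; [lia|].
  apply conjT_inA_of_divide; auto. eapply Z.divide_trans; [exact Hmn|].
  eapply passT_S_divide; eauto.
Qed.

Lemma passT_strict p q : Z.abs m < Z.abs n -> (1 <= q)%nat ->
  exists J, passT m n p J /\ ~ passT m n (p + q) J.
Proof.
  intros Hlt Hq. destruct (gcd_factor m n m_neq0) as [d [m' [n' [Hd [Em [En Hg]]]]]].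
  exists (d * n' ^ Z.of_nat p). split.
  - pose proof (passT_scaled d m' n' Em En p 0 1) as H.
    rewrite Nat.add_0_r, Z.mul_1_r in H. apply H. exact I.
  - rewrite Nat.add_comm. pose proof (passT_scaled d m' n' Em En p q 1) as H.
    rewrite Nat.add_comm, Z.mul_1_r in H. rewrite H, Z.mul_1_r.
    destruct q as [|q]; [lia|]. intros Hpass. apply passT_S_divide in Hpass.
    rewrite En in Hpass. apply Z.mul_divide_cancel_l in Hpass; [|lia].
    apply (coprime_divide_pow n' m' p) in Hpass; [|rewrite Z.gcd_comm; exact Hg].
    apply Z.divide_1_r in Hpass. destruct Hpass as [H1|H1]; subst n'; lia.
Qed.

Lemma passT_not_conjT_inA p q : (1 <= p)%nat -> ~ (m | n) ->
  exists J, passT m n q J /\ ~ conjT_inA m n p J.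
Proof.
  intros Hp Hmn. destruct (gcd_factor m n m_neq0) as [d [m' [n' [Hd [Em [En Hg]]]]]].
  exists (d * n' ^ Z.of_nat q). split.
  - pose proof (passT_scaled d m' n' Em En q 0 1) as H.
    rewrite Nat.add_0_r, Z.mul_1_r in H. apply H. exact I.
  - destruct p as [|p]; [lia|]. intros [H _].
    apply Z.mod_divide in H; auto. rewrite Em in H. apply Z.mul_divide_cancel_l in H; [|lia].
    apply (coprime_divide_pow m' n' q) in H; [|exact Hg].
    apply Z.divide_1_r in H. apply Hmn. rewrite Em, En.
    destruct H as [H|H]; rewrite H; [exists n'; ring | exists (- n'); ring].
Qed.

End Passing.

Lemma app_inv_length {A} : forall (a b x y : list A),
  length a = length b -> a ++ x = b ++ y -> a = b.
Proof.
  induction a as [|u a IH]; intros [|v b] x y Hl He; simpl in *; try discriminate; auto.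
  injection He as -> He. f_equal. eapply IH; eauto.
Qed.

Section Rigidity.
Variables m n : Z.
Hypothesis m_neq0 : m <> 0.
Hypothesis n_neq0 : n <> 0.
Local Notation nf := (nf m n).

Definition no_tinv_head (X : nform) : Prop :=
  match fst X with (_, true) :: _ => False | _ => True end.

Lemma no_tinv_head_zeros k s : no_tinv_head (zeros k, s).
Proof. destruct k; exact I. Qed.

Lemma lmulT_no_tinv_head X : no_tinv_head X -> lmulT X = ((0, false) :: fst X, snd X).
Proof. destruct X as [[|[r [|]] b] s]; simpl; auto; contradiction. Qed.

Lemma lmulA_syl_length : forall b j s, length (fst (lmulA_syl m n j b s)) = length b.
Proof. induction b as [|[r e] b IH]; intros; simpl; auto. Qed.

Lemma lmulA_syl_app : forall B j b s, lmulA_syl m n j (B ++ b) s =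
  (fst (lmulA_syl m n j B 0) ++ fst (lmulA_syl m n (snd (lmulA_syl m n j B 0)) b s),
   snd (lmulA_syl m n (snd (lmulA_syl m n j B 0)) b s)).
Proof.
  induction B as [|[r e] B IH]; intros j b s; simpl.
  - destruct (lmulA_syl m n j b s); reflexivity.
  - rewrite IH. reflexivity.
Qed.

(* A word with only positive t-letters cannot cancel against a normal form
   that does not start with t^-1. *)
Lemma lmul_fwd_word : forall ks, exists B c, length B = length ks /\ no_tinv_head (B, 0) /\
  forall Y, reduced m n Y -> no_tinv_head Y ->
    lmul m n (fwd_word ks) Y = (B ++ fst (lmulA m n c Y), snd (lmulA m n c Y)).
Proof.
  induction ks as [|k ks IH].
  - exists [], 0. split; [reflexivity|split; [exact I|]].
    intros Y HY _. simpl. rewrite lmulA_0 by auto. destruct Y; reflexivity.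
  - destruct IH as [B [c [Hl [HB Hlmul]]]].
    set (c0 := (0 + k) / n * m).
    exists (((0 + k) mod n, false) :: fst (lmulA_syl m n c0 B 0)),
           (snd (lmulA_syl m n c0 B 0) + c).
    split; [simpl; rewrite lmulA_syl_length; auto|split; [exact I|]].
    intros Y HY HYh. cbn [fwd_word]. rewrite lmul_app.
    change (lmul m n ((GT, false) :: fwd_word ks) Y)
      with (lmulT (lmul m n (fwd_word ks) Y)).
    rewrite lmul_gpowA, Hlmul by auto using lmulT_reduced, lmul_reduced.
    assert (Hhead : no_tinv_head (B ++ fst (lmulA m n c Y), snd (lmulA m n c Y))).
    { destruct B as [|[r [|]] B]; simpl in *; auto.
      destruct Y as [[|[r [|]] b] s]; simpl in *; auto. }
    rewrite (lmulT_no_tinv_head _ Hhead).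
    unfold lmulA. cbn [fst snd lmulA_syl tmod tcarry]. fold c0.
    rewrite lmulA_syl_app, lmulA_syl_add by auto. reflexivity.
Qed.

Lemma nf_fwd_word_no_tinv_head ks : no_tinv_head (nf (fwd_word ks)).
Proof.
  destruct (lmul_fwd_word ks) as [B [c [_ [HB Hlmul]]]]. unfold nf. rewrite Hlmul by exact I.
  destruct B as [|[r [|]] B]; simpl in *; auto.
Qed.

Lemma coset_fwd_word_prefix K1 K2 Y1 Y2 : length K1 = length K2 ->
  no_tinv_head (nf Y1) -> no_tinv_head (nf Y2) ->
  fst (nf (fwd_word K1 ++ Y1)) = fst (nf (fwd_word K2 ++ Y2)) ->
  fst (nf (fwd_word K1)) = fst (nf (fwd_word K2)).
Proof.
  intros Hl H1 H2 H.
  destruct (lmul_fwd_word K1) as [B1 [c1 [Hl1 [_ Hlmul1]]]].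
  destruct (lmul_fwd_word K2) as [B2 [c2 [Hl2 [_ Hlmul2]]]].
  rewrite !nf_app, Hlmul1, Hlmul2 in H by auto using nf_reduced. simpl in H.
  apply app_inv_length in H; [|congruence].
  unfold nf. rewrite Hlmul1, Hlmul2 by exact I. simpl. congruence.
Qed.

End Rigidity.

Section Configuration.
Variables m n : Z.
Hypothesis m_neq0 : m <> 0.
Hypothesis n_neq0 : n <> 0.
Local Notation nf := (nf m n).

Variables (u1 u2 u3 : vertex) (g : word) (ks1 ks2 : list Z).
Hypothesis u1_typeA : vty u1 = TypeA.
Hypothesis u2_typeA : vty u2 = TypeA.
Hypothesis u3_typeA : vty u3 = TypeA.
Hypothesis line_u1 : forall h, line m n u1 h <-> fst (nf h) = fst (nf g).
Hypothesis line_u2 : forall h, line m n u2 h <-> fst (nf h) = fst (nf (g ++ fwd_word ks1)).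
Hypothesis line_u3 :
  forall h, line m n u3 h <-> fst (nf h) = fst (nf (g ++ fwd_word ks1 ++ fwd_word ks2)).
Hypothesis ks1_nonempty : (1 <= length ks1)%nat.
Hypothesis ks2_nonempty : (1 <= length ks2)%nat.

Let p := length ks1.
Let q := length ks2.

Lemma texp_line_u1 h : line m n u1 h -> texp h = texp g.
Proof. intros H. apply line_u1 in H. exact (texp_coset m n m_neq0 n_neq0 _ _ H). Qed.

Lemma texp_line_u2 h : line m n u2 h -> texp h = texp g + Z.of_nat p.
Proof.
  intros H. apply line_u2, texp_coset in H; auto.
  rewrite H, texp_app, texp_fwd_word. reflexivity.
Qed.

Lemma texp_line_u3 h : line m n u3 h -> texp h = texp g + Z.of_nat (p + q).
Proof.
  intros H. apply line_u3, texp_coset in H; auto.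
  rewrite H, !texp_app, !texp_fwd_word. unfold p, q. lia.
Qed.

Lemma Lam13_crossing w : Lam m n u1 u3 w -> vty w = TypeT /\ exists i,
  line m n w (g ++ gpow GA i) /\
  fst (nf (gpow GA i ++ tpow p)) = fst (nf (fwd_word ks1)) /\
  fst (nf (g ++ gpow GA i ++ tpow (p + q))) = fst (nf (g ++ fwd_word ks1 ++ fwd_word ks2)).
Proof.
  intros [[Hns1 [h1 [L1 W1]]] [_ [h3 [L3 W3]]]].
  assert (Hw : vty w = TypeT)
    by (apply (adjL_typeA_typeT m n m_neq0 n_neq0 u1); [auto | split; eauto]).
  split; auto.
  pose proof (line_typeT_diff m n w h1 h3 Hw W1 W3) as H13.
  rewrite (texp_line_u1 h1), (texp_line_u3 h3), Z.add_simpl_l, gpowT_of_nat in H13 by auto.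
  apply line_u1, bs_eq_of_coset in L1; auto.
  set (i := snd (nf h1) - snd (nf g)) in L1. clearbody i.
  assert (G3 : fst (nf (g ++ gpow GA i ++ tpow (p + q))) = fst (nf h3))
    by (symmetry; apply coset_bs_eq; auto; rewrite H13, L1, <- app_assoc; reflexivity).
  apply line_u3 in L3. rewrite L3 in G3.
  exists i. split; [|split; [|exact G3]].
  - rewrite <- L1. exact W1.
  - apply coset_cancel_l in G3; auto.
    destruct p as [|p'] eqn:Ep; [unfold p in Ep; lia|].
    replace (gpow GA i ++ tpow (S p')) with (fwd_word (i :: repeat 0 p'))
      by (cbn [fwd_word]; rewrite fwd_word_zeros; reflexivity).
    apply (coset_fwd_word_prefix m n m_neq0 n_neq0 _ _ (tpow q) (fwd_word ks2)).
    + simpl. rewrite repeat_length. auto.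
    + rewrite nf_tpow by auto. apply no_tinv_head_zeros.
    + apply nf_fwd_word_no_tinv_head; auto.
    + rewrite <- G3, tpow_add. cbn [fwd_word]. rewrite fwd_word_zeros, <- app_assoc.
      reflexivity.
Qed.


Lemma Lam13_adjL_u2 w : Lam m n u1 u3 w -> adjL m n u2 w.
Proof.
  intros H. destruct (Lam13_crossing w H) as [Hw [i [Wi [GP _]]]].
  split; [apply not_vsame_typeA_typeT; auto|].
  exists (g ++ gpow GA i ++ tpow p). split.
  - apply line_u2, coset_app_l; auto.
  - rewrite app_assoc, <- gpowT_of_nat. apply line_typeT_app; auto.
Qed.

Section Crossing.
Variable i : Z.
Hypothesis coset_u2 : fst (nf (gpow GA i ++ tpow p)) = fst (nf (fwd_word ks1)).
Hypothesis coset_u3 :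
  fst (nf (g ++ gpow GA i ++ tpow (p + q))) = fst (nf (g ++ fwd_word ks1 ++ fwd_word ks2)).

Lemma Lam12_not_Lam13 : Z.abs m < Z.abs n -> exists w, Lam m n u1 u2 w /\ ~ Lam m n u1 u3 w.
Proof.
  intros Hlt. destruct (passT_strict m n m_neq0 n_neq0 p q Hlt ks2_nonempty) as [J [HJ HnJ]].
  set (x := (g ++ gpow GA i) ++ gpow GA J).
  assert (Hx : line m n (Vtx TypeT x) x) by apply line_vrep.
  exists (Vtx TypeT x). split; [split|].
  - split; [apply not_vsame_typeA_typeT; auto|].
    exists x. split; [apply line_u1; unfold x; rewrite !coset_gpowA_r; auto | exact Hx].
  - split; [apply not_vsame_typeA_typeT; auto|].
    exists (x ++ tpow p). split.
    + destruct (proj1 (passT_spec m n m_neq0 n_neq0 p J) HJ) as [f Hf].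
      apply line_u2. rewrite <- (coset_app_l m n m_neq0 n_neq0 g _ _ coset_u2).
      rewrite <- (coset_gpowA_r m n m_neq0 n_neq0 (g ++ gpow GA i ++ tpow p) f).
      apply coset_bs_eq; auto.
      unfold x. rewrite <- !app_assoc, Hf. reflexivity.
    + rewrite <- gpowT_of_nat. apply line_typeT_app; auto.
  - intros [_ [_ [h [L3 W3]]]].
    pose proof (line_typeT_diff m n (Vtx TypeT x) _ _ eq_refl Hx W3) as Hh.
    rewrite (texp_line_u3 h L3) in Hh. unfold x in Hh.
    rewrite !texp_app, !texp_gpow, !Z.add_0_r, Z.add_simpl_l, gpowT_of_nat in Hh.
    apply line_u3 in L3. rewrite (coset_bs_eq m n m_neq0 n_neq0 _ _ Hh), <- coset_u3 in L3.
    rewrite <- !app_assoc in L3.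
    apply coset_cancel_l, coset_cancel_l in L3; auto.
    apply HnJ, passT_coset; auto.
Qed.

Lemma Lam23_not_Lam13 : ~ (m | n) -> exists w, Lam m n u2 u3 w /\ ~ Lam m n u1 u3 w.
Proof.
  intros Hmn.
  destruct (passT_not_conjT_inA m n m_neq0 n_neq0 p q ks1_nonempty Hmn) as [J [HJ HnJ]].
  set (y := ((g ++ gpow GA i) ++ tpow p) ++ gpow GA J).
  assert (Hy : line m n (Vtx TypeT y) y) by apply line_vrep.
  exists (Vtx TypeT y). split; [split|].
  - split; [apply not_vsame_typeA_typeT; auto|].
    exists y. split; [|exact Hy].
    apply line_u2. unfold y. rewrite coset_gpowA_r, <- app_assoc by auto.
    apply coset_app_l; auto.
  - split; [apply not_vsame_typeA_typeT; auto|].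
    exists (y ++ tpow q). split.
    + destruct (proj1 (passT_spec m n m_neq0 n_neq0 q J) HJ) as [f Hf].
      apply line_u3. rewrite <- coset_u3.
      rewrite <- (coset_gpowA_r m n m_neq0 n_neq0 (g ++ gpow GA i ++ tpow (p + q)) f).
      apply coset_bs_eq; auto. unfold y. rewrite tpow_add, <- !app_assoc, Hf. reflexivity.
    + rewrite <- gpowT_of_nat. apply line_typeT_app; auto.
  - intros [[_ [h [L1 W1]]] _].
    pose proof (line_typeT_diff m n (Vtx TypeT y) _ _ eq_refl Hy W1) as Hh.
    assert (Hexp : texp h - texp y = - Z.of_nat p).
    { rewrite (texp_line_u1 h L1). unfold y. rewrite !texp_app, !texp_gpow, texp_tpow. simpl. lia. }
    rewrite Hexp, gpowT_opp_nat in Hh.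
    apply line_u1 in L1. rewrite (coset_bs_eq m n m_neq0 n_neq0 _ _ Hh) in L1.
    rewrite <- (coset_gpowA_r m n m_neq0 n_neq0 g i), <- (app_nil_r (g ++ gpow GA i)) in L1.
    unfold y in L1. rewrite <- !app_assoc in L1.
    apply coset_cancel_l, coset_cancel_l, bs_eq_of_coset in L1; auto.
    apply HnJ, conjT_inA_spec; auto. eexists. exact L1.
Qed.

Lemma Lam23_Lam13_of_divide : (m | n) -> psubset (Lam m n u2 u3) (Lam m n u1 u3).
Proof.
  intros Hmn w [[_ [h2 [L2 W2]]] A3]. pose proof A3 as [_ [h3 [L3 W3]]].
  assert (Hw : vty w = TypeT)
    by (apply (adjL_typeA_typeT m n m_neq0 n_neq0 u3); [auto | exact A3]).
  pose proof (line_typeT_diff m n w h2 h3 Hw W2 W3) as H23.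
  rewrite (texp_line_u2 h2 L2), (texp_line_u3 h3 L3) in H23.
  replace (texp g + Z.of_nat (p + q) - (texp g + Z.of_nat p)) with (Z.of_nat q) in H23 by lia.
  rewrite gpowT_of_nat in H23.
  apply line_u2 in L2. rewrite <- (coset_app_l m n m_neq0 n_neq0 g _ _ coset_u2) in L2.
  apply bs_eq_of_coset in L2; auto.
  set (c := snd (nf h2) - snd (nf (g ++ gpow GA i ++ tpow p))) in L2. clearbody c.
  rewrite L2 in H23.
  apply line_u3 in L3. rewrite <- coset_u3, (coset_bs_eq m n m_neq0 n_neq0 _ _ H23) in L3.
  rewrite tpow_add, <- !app_assoc in L3.
  apply coset_cancel_l, coset_cancel_l, coset_cancel_l, passT_coset in L3; auto.
  apply (conjT_inA_of_passT m n m_neq0 n_neq0 p q c Hmn ks2_nonempty) in L3.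
  apply conjT_inA_spec in L3 as [f Hf]; auto.
  split; [|exact A3].
  split; [apply not_vsame_typeA_typeT; auto|].
  exists (h2 ++ tnpow p). split.
  - apply line_u1. rewrite <- (coset_gpowA_r m n m_neq0 n_neq0 g (i + f)).
    apply coset_bs_eq; auto. rewrite L2, <- !app_assoc, Hf, gpow_add. reflexivity.
  - rewrite <- gpowT_opp_nat. apply line_typeT_app; auto.
Qed.

End Crossing.

Lemma Lam13_sub_Lam12 : psubset (Lam m n u1 u3) (Lam m n u1 u2).
Proof. intros w Hw. split; [apply Hw | apply Lam13_adjL_u2, Hw]. Qed.

Lemma Lam13_sub_Lam23 : psubset (Lam m n u1 u3) (Lam m n u2 u3).
Proof. intros w Hw. split; [apply Lam13_adjL_u2, Hw | apply Hw]. Qed.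

Lemma Lam_configuration : Z.abs m < Z.abs n -> (exists w, Lam m n u1 u3 w) ->
  pssubset (Lam m n u1 u3) (Lam m n u1 u2) /\
  psubset (Lam m n u1 u3) (Lam m n u2 u3) /\
  (~ (m | n) -> pssubset (Lam m n u1 u3) (Lam m n u2 u3)) /\
  ((m | n) -> peq (Lam m n u1 u3) (Lam m n u2 u3)).
Proof.
  intros Hlt [w0 Hw0]. destruct (Lam13_crossing w0 Hw0) as [_ [i [_ [Hu2 Hu3]]]].
  split; [|split; [|split]].
  - split; [exact Lam13_sub_Lam12|].
    destruct (Lam12_not_Lam13 i Hu2 Hu3 Hlt) as [w Hw]. exists w; exact Hw.
  - exact Lam13_sub_Lam23.
  - intros Hmn. split; [exact Lam13_sub_Lam23|].
    destruct (Lam23_not_Lam13 i Hu2 Hu3 Hmn) as [w Hw]. exists w; exact Hw.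
  - intros Hmn w. split; [apply Lam13_sub_Lam23 | apply (Lam23_Lam13_of_divide i Hu2 Hu3 Hmn)].
Qed.

End Configuration.

Theorem corollary3p7 (m n : Z) (u1 u2 u3 : vertex) :
  m <> 0 -> n <> 0 -> Z.abs m < Z.abs n ->
  vty u1 = TypeA -> vty u2 = TypeA -> vty u3 = TypeA ->
  Tlt m n u1 u2 -> Tlt m n u2 u3 ->
  (exists w, Lam m n u1 u3 w) ->
  pssubset (Lam m n u1 u3) (Lam m n u1 u2) /\
  psubset (Lam m n u1 u3) (Lam m n u2 u3) /\
  (~ (m | n) -> pssubset (Lam m n u1 u3) (Lam m n u2 u3)) /\
  ((m | n) -> peq (Lam m n u1 u3) (Lam m n u2 u3)).
Proof.
  intros Hm Hn Hlt Hv1 Hv2 Hv3 H12 H23 Hne.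
  destruct (Tlt_line m n Hm Hn u1 u2 (vrep u1) H12 (line_vrep m n u1)) as [ks1 [Hks1 Hu2]].
  destruct (Tlt_line m n Hm Hn u2 u3 (vrep u1 ++ fwd_word ks1) H23) as [ks2 [Hks2 Hu3]];
    [apply Hu2; reflexivity|].
  setoid_rewrite <- app_assoc in Hu3.
  apply (Lam_configuration m n Hm Hn u1 u2 u3 (vrep u1) ks1 ks2); auto.
  intros h. apply line_typeA; auto.
Qed.
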